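(* Let $Q$ be a quantale, $M$ and $N$ left $Q$-modules, and $f:M\to N$ a $Q$-module homomorphism with residuum $f_*:N\to M$ and associated nucleus $\gamma=f_*\circ f$. Then the image $M_\gamma=\gamma[M]$ coincides with the set of $\ker f$-saturated elements of $M$.
   Context: A quantale is a complete lattice with a monoid product distributing over arbitrary joins; a left $Q$-module is a complete lattice $M$ with an associative unital action of $Q$ distributing over joins in each argument; a $Q$-module homomorphism preserves arbitrary joins and the action. The residuum of a join-preserving map $f$ is $f_*(y)=\bigvee\{x\mid f(x)\le y\}$. $\ker f=\{(v,w)\in M^2\mid f(v)=f(w)\}$. For $R\subseteq M^2$, $s\in M$ is $R$-saturated if for all $(v,w)\in R$ and all $a\in Q$: $av\le s$ iff $aw\le s$. *)

Set Implicit Arguments.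

Record CompleteLattice := {
  cl_car :> Type;
  cl_le : cl_car -> cl_car -> Prop;
  cl_le_refl : forall x, cl_le x x;
  cl_le_trans : forall x y z, cl_le x y -> cl_le y z -> cl_le x z;
  cl_le_antisym : forall x y, cl_le x y -> cl_le y x -> x = y;
  cl_sup : (cl_car -> Prop) -> cl_car;
  cl_sup_ub : forall (S : cl_car -> Prop) x, S x -> cl_le x (cl_sup S);
  cl_sup_least : forall (S : cl_car -> Prop) y,
      (forall x, S x -> cl_le x y) -> cl_le (cl_sup S) y
}.

Arguments cl_le {c} _ _.
Arguments cl_sup {c} _.

Definition img {A B : Type} (g : A -> B) (S : A -> Prop) : B -> Prop :=
  fun y => exists x, S x /\ y = g x.

Record Quantale := {
  q_lat :> CompleteLattice;
  q_mul : q_lat -> q_lat -> q_lat;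
  q_one : q_lat;
  q_mulA : forall a b c, q_mul a (q_mul b c) = q_mul (q_mul a b) c;
  q_mul1l : forall a, q_mul q_one a = a;
  q_mul1r : forall a, q_mul a q_one = a;
  q_mul_supr : forall a (S : q_lat -> Prop),
      q_mul a (cl_sup S) = cl_sup (img (q_mul a) S);
  q_mul_supl : forall (S : q_lat -> Prop) b,
      q_mul (cl_sup S) b = cl_sup (img (fun a => q_mul a b) S)
}.

Arguments q_mul {q} _ _.
Arguments q_one {q}.

Record QModule (Q : Quantale) := {
  m_lat :> CompleteLattice;
  m_act : Q -> m_lat -> m_lat;
  m_actA : forall (a b : Q) m, m_act (q_mul a b) m = m_act a (m_act b m);
  m_act1 : forall m, m_act q_one m = m;
  m_act_supl : forall (S : Q -> Prop) m,
      m_act (cl_sup S) m = cl_sup (img (fun a => m_act a m) S);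
  m_act_supr : forall (a : Q) (S : m_lat -> Prop),
      m_act a (cl_sup S) = cl_sup (img (m_act a) S)
}.

Arguments m_act {Q q} _ _.

Definition is_Qhom {Q : Quantale} {M N : QModule Q} (f : M -> N) : Prop :=
  (forall S : M -> Prop, f (cl_sup S) = cl_sup (img f S)) /\
  (forall (a : Q) (m : M), f (m_act a m) = m_act a (f m)).

Definition residuum {Q : Quantale} {M N : QModule Q} (f : M -> N) (y : N) : M :=
  cl_sup (fun x : M => cl_le (f x) y).

Definition nucleus {Q : Quantale} {M N : QModule Q} (f : M -> N) (x : M) : M :=
  residuum f (f x).

Definition kerf {Q : Quantale} {M N : QModule Q} (f : M -> N) (v w : M) : Prop :=
  f v = f w.

Definition saturated {Q : Quantale} {M : QModule Q} (R : M -> M -> Prop) (s : M)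
  : Prop :=
  forall v w, R v w -> forall a : Q,
      (cl_le (m_act a v) s <-> cl_le (m_act a w) s).

From Stdlib Require Import Setoid.

(* The residuum f_* is right adjoint to f: f x <= y iff x <= f_* y.  Hence
   a.v <= gamma x iff a.(f v) <= f x, a condition that only depends on f v,
   so every gamma x is ker f-saturated.  Conversely f (gamma s) = f s, so
   (gamma s, s) lies in ker f, and saturation with a = 1 turns s <= s into
   gamma s <= s; the reverse inequality holds because gamma is extensive. *)

Lemma cl_sup_pair_le {L : CompleteLattice} (x y : L) :
  cl_le x y -> cl_sup (fun z => z = x \/ z = y) = y.
Proof.
  intros Hxy. apply cl_le_antisym.
  - apply cl_sup_least. intros z [-> | ->]; [exact Hxy | apply cl_le_refl].
  - apply cl_sup_ub. now right.
Qed.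

Section JoinPreserving.

Variables (Q : Quantale) (M N : QModule Q) (f : M -> N).
Hypothesis f_sup : forall S : M -> Prop, f (cl_sup S) = cl_sup (img f S).

Lemma sup_preserving_monotone (x y : M) : cl_le x y -> cl_le (f x) (f y).
Proof.
  intros Hxy. rewrite <- (cl_sup_pair_le x y Hxy), f_sup.
  apply cl_sup_ub. exists x. split; [now left | reflexivity].
Qed.

Lemma residuum_counit (y : N) : cl_le (f (residuum f y)) y.
Proof.
  unfold residuum. rewrite f_sup. apply cl_sup_least.
  intros z [x [Hx ->]]. exact Hx.
Qed.

Lemma residuum_adjoint (x : M) (y : N) :
  cl_le (f x) y <-> cl_le x (residuum f y).
Proof.
  split.
  - intros Hxy. now apply cl_sup_ub.
  - intros Hxy. eapply cl_le_trans.
    + apply sup_preserving_monotone, Hxy.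
    + apply residuum_counit.
Qed.

Lemma nucleus_extensive (x : M) : cl_le x (nucleus f x).
Proof. apply residuum_adjoint, cl_le_refl. Qed.

Lemma f_nucleus (x : M) : f (nucleus f x) = f x.
Proof.
  apply cl_le_antisym.
  - apply residuum_counit.
  - apply sup_preserving_monotone, nucleus_extensive.
Qed.

Hypothesis f_act : forall (a : Q) (m : M), f (m_act a m) = m_act a (f m).

Lemma nucleus_saturated (x : M) : saturated (kerf f) (nucleus f x).
Proof.
  intros v w Hvw a. unfold nucleus.
  rewrite <- !residuum_adjoint, !f_act, Hvw.
  reflexivity.
Qed.

Lemma saturated_nucleus_fixed (s : M) :
  saturated (kerf f) s -> nucleus f s = s.
Proof.
  intros Hs. apply cl_le_antisym.
  - assert (Hker : kerf f (nucleus f s) s) by apply f_nucleus.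
    specialize (Hs _ _ Hker q_one). rewrite !m_act1 in Hs.
    apply Hs, cl_le_refl.
  - apply nucleus_extensive.
Qed.

End JoinPreserving.

Theorem lemma1p7 (Q : Quantale) (M N : QModule Q) (f : M -> N)
  (hf : is_Qhom f) :
  forall s : M,
    (exists x : M, s = nucleus f x) <-> saturated (kerf f) s.
Proof.
  destruct hf as [f_sup f_act]. intros s. split.
  - intros [x ->]. now apply nucleus_saturated.
  - intros Hs. exists s. symmetry. now apply saturated_nucleus_fixed.
Qed.
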